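(* Let $M$ be a finite $\mathcal J$-above semigroup. Then $W(M^I)=\{m\in M^I:\mathcal L_m=\mathcal H_m\}$ is a union of $\mathcal J$-classes of $M^I$.
   Context: $M^I$ is $M$ with a new identity $I$ adjoined; $\mathcal L_m,\mathcal H_m$ denote the $\mathcal L$- and $\mathcal H$-classes of $m$ in $M^I$. A semigroup $M$ is finite $\mathcal J$-above if $\{y\in M: y\ge_{\mathcal J}x\}$ is finite for every $x\in M$. *)

From Stdlib Require Import List.
Set Implicit Arguments.

Section Semigroup.
Variables (T : Type) (mul : T -> T -> T).

Definition associative_op : Prop :=
  forall x y z, mul x (mul y z) = mul (mul x y) z.

(* M^I : M with a new identity I adjoined, I represented by None. *)
Definition mulI (a b : option T) : option T :=
  match a, b with
  | None, _ => b
  | _, None => a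
  | Some x, Some y => Some (mul x y)
  end.

Definition Lle (a b : option T) : Prop := exists s, a = mulI s b.
Definition Rle (a b : option T) : Prop := exists s, a = mulI b s.
Definition Jle (a b : option T) : Prop := exists s t, a = mulI s (mulI b t).

Definition Lrel a b : Prop := Lle a b /\ Lle b a.
Definition Rrel a b : Prop := Rle a b /\ Rle b a.
Definition Hrel a b : Prop := Lrel a b /\ Rrel a b.
Definition Jrel a b : Prop := Jle a b /\ Jle b a.

Definition inW (m : option T) : Prop := forall x, Lrel x m <-> Hrel x m.

Definition finite_J_above : Prop :=
  forall x : T, exists l : list T,
    forall y : T, Jle (Some x) (Some y) -> In y l.

End Semigroup.

(* Finiteness J-above makes M^I stable: if a <=_J ab then
   a = u a (bv), hence a = u^k a (bv)^k for all k; the powers (bv)^k all lie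
   J-above a, so two of them coincide, which yields a = a b v (bv)^p and thus
   a R ab.  Dually a <=_J ba gives a L ba.  Stability makes J = D: if m J n
   then m L z R n for some z.  Now let m in W, n J m and x L n.  Then x J m,
   so x R m (take z with m L z R x; z L m forces z H m), and likewise
   n R m; hence x R n and x H n.  Reversing the multiplication swaps L and R,
   so the L-half of stability is the R-half for the opposite semigroup. *)
From Stdlib Require Import List Classical Lia.
Set Implicit Arguments.

Lemma nat_seq_in_list_repeats (A : Type) (l : list A) (f : nat -> A) :
  (forall k, In (f k) l) -> exists i j, i < j /\ f i = f j.
Proof.
  revert f; induction l as [|a l IH]; intros f Hf.
  - destruct (Hf 0).
  - destruct (classic (exists k, f k = a)) as [[k0 Hk0]|Hnot_a].
    + destruct (classic (exists n, f (n + S k0) = a)) as [[n Hn]|Hnot_a'].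
      * exists k0, (n + S k0); split; [lia | congruence].
      * destruct (IH (fun n => f (n + S k0))) as [i [j [Hij Heq]]].
        { intro k; destruct (Hf (k + S k0)) as [E|E]; [|exact E].
          exfalso; apply Hnot_a'; exists k; auto. }
        exists (i + S k0), (j + S k0); split; [lia | exact Heq].
    + apply IH; intro k; destruct (Hf k) as [E|E]; [|exact E].
      exfalso; apply Hnot_a; exists k; auto.
Qed.

Section Green.
Variables (T : Type) (mul : T -> T -> T).
Hypothesis Hassoc : associative_op mul.

Local Notation "x ** y" := (mulI mul x y) (at level 40, left associativity).

Lemma mulI_assoc a b c : a ** (b ** c) = a ** b ** c.
Proof. destruct a, b, c; simpl; auto. f_equal; apply Hassoc. Qed.

Lemma mulI_1l a : None ** a = a.
Proof. destruct a; reflexivity. Qed.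

Lemma mulI_1r a : a ** None = a.
Proof. destruct a; reflexivity. Qed.

Lemma Jle_trans a b c : Jle mul a b -> Jle mul b c -> Jle mul a c.
Proof.
  intros [s [t Hab]] [s' [t' Hbc]]; exists (s ** s'), (t' ** t).
  subst; rewrite !mulI_assoc; reflexivity.
Qed.

Lemma Lle_Jle a b : Lle mul a b -> Jle mul a b.
Proof. intros [s Hab]; exists s, None; rewrite mulI_1r; exact Hab. Qed.

Lemma Rle_Jle a b : Rle mul a b -> Jle mul a b.
Proof. intros [t Hab]; exists None, t; rewrite mulI_1l; exact Hab. Qed.

Lemma Rle_trans a b c : Rle mul a b -> Rle mul b c -> Rle mul a c.
Proof. intros [s Hab] [s' Hbc]; exists (s' ** s); subst; symmetry; apply mulI_assoc. Qed.

Fixpoint powI (c : option T) (k : nat) : option T :=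
  match k with 0 => None | S k => c ** powI c k end.

Lemma powI_add c i j : powI c (i + j) = powI c i ** powI c j.
Proof.
  induction i as [|i IH]; simpl; [reflexivity|].
  rewrite IH; apply mulI_assoc.
Qed.

Lemma powI_succ_r c k : powI c (S k) = powI c k ** c.
Proof.
  replace (S k) with (k + 1) by lia.
  rewrite powI_add; simpl; rewrite mulI_1r; reflexivity.
Qed.

Lemma two_sided_fixed_pow a u c :
  a = u ** a ** c -> forall k, a = powI u k ** a ** powI c k.
Proof.
  intros Ha k; induction k as [|k IH]; [simpl; now rewrite mulI_1r|].
  rewrite powI_succ_r; simpl powI.
  rewrite IH at 1; rewrite Ha at 1; rewrite !mulI_assoc; reflexivity.
Qed.

Hypothesis Hfin : finite_J_above mul.

Lemma Jle_above_finite a : exists l, forall y, Jle mul a y -> In y l.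
Proof.
  destruct a as [x|].
  - destruct (Hfin x) as [l Hl]; exists (None :: map Some l).
    intros [y|] Hy; [right; apply in_map, Hl, Hy | left; reflexivity].
  - exists (None :: nil); intros [y|] [s [t Hy]]; [|left; reflexivity].
    destruct s, t; discriminate.
Qed.

Lemma Jle_mulr_Rle a b : Jle mul a (a ** b) -> Rle mul a (a ** b).
Proof.
  intros [u [v Huv]].
  set (c := b ** v).
  assert (Hpow : forall k, a = powI u k ** a ** powI c k).
  { apply two_sided_fixed_pow; unfold c; rewrite !mulI_assoc in *; exact Huv. }
  destruct (Jle_above_finite a) as [l Hl].
  destruct (nat_seq_in_list_repeats l (powI c)) as [i [j [Hij Hcij]]].
  { intro k; apply Hl; exists (powI u k ** a), None.
    rewrite mulI_1r; apply Hpow. }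
  set (p := j - S i).
  assert (Hperiod : a = a ** powI c (S p)).
  { replace j with (i + S p) in Hcij by (unfold p; lia).
    rewrite powI_add in Hcij.
    rewrite (Hpow i) at 1; rewrite Hcij, mulI_assoc, <- (Hpow i); reflexivity. }
  exists (v ** powI c p).
  rewrite Hperiod at 1; simpl; unfold c; rewrite !mulI_assoc; reflexivity.
Qed.

End Green.

Section Duality.
Variables (T : Type) (mul : T -> T -> T).
Hypothesis Hassoc : associative_op mul.

Let mul_opp (x y : T) : T := mul y x.

Lemma mulI_opp a b : mulI mul_opp a b = mulI mul b a.
Proof. destruct a, b; reflexivity. Qed.

Lemma associative_op_opp : associative_op mul_opp.
Proof. intros x y z; unfold mul_opp; symmetry; apply Hassoc. Qed.

Lemma Jle_opp a b : Jle mul_opp a b <-> Jle mul a b.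
Proof.
  split; intros [s [t Hab]]; exists t, s; rewrite Hab, !mulI_opp;
    [symmetry|]; apply mulI_assoc; exact Hassoc.
Qed.

Lemma Rle_opp a b : Rle mul_opp a b <-> Lle mul a b.
Proof. split; intros [s Hab]; exists s; rewrite Hab, ?mulI_opp; reflexivity. Qed.

Lemma finite_J_above_opp : finite_J_above mul -> finite_J_above mul_opp.
Proof.
  intros Hfin x; destruct (Hfin x) as [l Hl]; exists l.
  intros y Hy; apply Hl, Jle_opp, Hy.
Qed.

Lemma Jle_mull_Lle (Hfin : finite_J_above mul) a b :
  Jle mul a (mulI mul b a) -> Lle mul a (mulI mul b a).
Proof.
  intro Hab; rewrite <- mulI_opp; apply Rle_opp.
  apply (Jle_mulr_Rle associative_op_opp (finite_J_above_opp Hfin)).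
  apply Jle_opp; rewrite mulI_opp; exact Hab.
Qed.

End Duality.

Section Stable.
Variables (T : Type) (mul : T -> T -> T).
Hypothesis Hassoc : associative_op mul.
Hypothesis Hfin : finite_J_above mul.

Local Notation "x ** y" := (mulI mul x y) (at level 40, left associativity).

Lemma Jrel_Lrel_Rrel a b : Jrel mul a b -> exists z, Lrel mul a z /\ Rrel mul z b.
Proof.
  intros [[s [t Ha]] Hba].
  exists (b ** t).
  assert (Hz_b : Jle mul (b ** t) b) by (apply Rle_Jle; exists t; reflexivity).
  assert (Ha_z : Jle mul a (b ** t)) by (apply Lle_Jle; exists s; exact Ha).
  split; split.
  - exists s; exact Ha.
  - rewrite Ha; apply (Jle_mull_Lle Hassoc Hfin).
    rewrite <- Ha; apply (Jle_trans Hassoc Hz_b Hba).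
  - exists t; reflexivity.
  - apply (Jle_mulr_Rle Hassoc Hfin), (Jle_trans Hassoc Hba Ha_z).
Qed.

Lemma inW_Jrel_Rrel m y : inW mul m -> Jrel mul y m -> Rrel mul y m.
Proof.
  intros Hm [Hym Hmy].
  destruct (Jrel_Lrel_Rrel (conj Hmy Hym)) as [z [Hmz_L Hzy_R]].
  destruct (proj1 (Hm z) (conj (proj2 Hmz_L) (proj1 Hmz_L))) as [_ Hzm_R].
  destruct Hzm_R, Hzy_R.
  split; eapply Rle_trans; eauto.
Qed.

End Stable.

Theorem lemma8p4 (T : Type) (mul : T -> T -> T)
  (Hassoc : associative_op mul) (Hfin : finite_J_above mul) :
  forall m n : option T, Jrel mul m n -> inW mul m -> inW mul n.
Proof.
  intros m n [Hmn Hnm] Hm x; split; [|intros [Hxn _]; exact Hxn].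
  intros [Hxn Hnx]; split; [split; assumption|].
  assert (Hxm : Jrel mul x m).
  { split.
    - apply (Jle_trans Hassoc (Lle_Jle Hxn) Hnm).
    - apply (Jle_trans Hassoc Hmn (Lle_Jle Hnx)). }
  destruct (inW_Jrel_Rrel Hassoc Hfin Hm Hxm) as [Hxm_R Hmx_R].
  destruct (inW_Jrel_Rrel Hassoc Hfin Hm (conj Hnm Hmn)) as [Hnm_R Hmn_R].
  split; eapply Rle_trans; eauto.
Qed.
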